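(* Let $w,u$ be integers with $w/2 \le u < w$, fix a sign, and let $q = 2^w - 2^u \pm 1$. Let $\lambda$ be a positive integer that is an integer multiple of $q$. Define $c = \lfloor \lambda / 2^w \rfloor$ and, for integers $x$, $$v(x) = \left\lfloor -\frac{x(2^u \mp 1)}{2^w} \right\rfloor, \qquad f(x) = x + v(x),$$ where $\mp$ is the sign opposite to the one chosen in $q$, so that $q = 2^w - (2^u \mp 1)$. Define the sequence $b_0 = c$ and $b_{i+1} = b_i + (c - f(b_i))$ for $i \ge 0$. Then there exists a finite $i \ge 0$ with $f(b_i) = c$. In other words, the loop ''while $f(b_i)\neq c$: $b_{i+1}\gets b_i + (c-f(b_i))$'' started from $b_0=c$ terminates after finitely many iterations.
   Context: This is the iterative part of a division algorithm (''Algorithm 1''). Its input is $\lambda$ and $q = 2^w - 2^u \pm 1$. It sets $c \gets \lfloor \lambda/2^w \rfloor$ and $b_0 \gets c$. While $f(b_i) \neq c$, it sets $b_{i+1} \gets b_i + (c - f(b_i))$. The last $b_i$ computed is called $b^*$. It then outputs $b = b^* + (\mathrm{LSB}(\lambda) \ \mathrm{XOR}\ \mathrm{LSB}(b^* ))$, where $\mathrm{LSB}$ denotes the least significant bit. *)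

From Stdlib Require Import ZArith.
Open Scope Z_scope.

(* The sign choice: s = 1 gives q = 2^w - 2^u + 1, s = -1 gives q = 2^w - 2^u - 1.
   In both cases q = 2^w - (2^u - s). *)
Definition qmod (w u s : Z) : Z := 2 ^ w - 2 ^ u + s.

Definition vfun (w u s x : Z) : Z := Z.div (- (x * (2 ^ u - s))) (2 ^ w).

Definition ffun (w u s x : Z) : Z := x + vfun w u s x.

Definition cval (w lam : Z) : Z := Z.div lam (2 ^ w).

Fixpoint bseq (w u s lam : Z) (i : nat) : Z :=
  match i with
  | O => cval w lam
  | S i' => let b := bseq w u s lam i' in b + (cval w lam - ffun w u s b)
  end.

(** Writing [q = 2^w - (2^u - s)], one has [f x = floor (x q / 2^w)], and since [lam = k q]
    also [c = f k]. As [0 < q <= 2^w], the map [f] is nondecreasing and 1-Lipschitz, so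
    [b_i <= k] is invariant, the corrections [c - f b_i = f k - f b_i] are nonnegative, and
    the iterates strictly increase until [f b_i = c]. Being bounded by [k], they must stop. *)

From Stdlib Require Import ZArith Lia.
Open Scope Z_scope.

Section CorrectionIteration.

Variables (f : Z -> Z) (k : Z) (b : nat -> Z).

Hypothesis f_nondecreasing : forall x y, x <= y -> f x <= f y.
Hypothesis f_1_lipschitz : forall x y, x <= y -> f y <= f x + (y - x).
Hypothesis b0_le : b 0%nat <= k.
Hypothesis b_succ : forall i, b (S i) = b i + (f k - f (b i)).

Lemma correction_iter_le i : b i <= k.
Proof.
  induction i as [|i IH]; [exact b0_le|].
  rewrite b_succ. pose proof (f_1_lipschitz _ _ IH). lia.
Qed.

Lemma correction_iter_progress i :
  (exists j, f (b j) = f k) \/ b 0%nat + Z.of_nat i <= b i.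
Proof.
  induction i as [|i [Hstop | IH]]; [right; lia | left; exact Hstop |].
  destruct (Z.eq_dec (f (b i)) (f k)) as [Hfix | Hne]; [left; exists i; exact Hfix |].
  right. rewrite b_succ.
  pose proof (f_nondecreasing _ _ (correction_iter_le i)). lia.
Qed.

Lemma correction_iter_terminates : exists i, f (b i) = f k.
Proof.
  destruct (correction_iter_progress (Z.to_nat (k - b 0%nat + 1))) as [Hstop | Hgrow];
    [exact Hstop |].
  pose proof (correction_iter_le (Z.to_nat (k - b 0%nat + 1))). lia.
Qed.

End CorrectionIteration.

Lemma ffun_mul_qmod_div w u s x : 2 ^ w <> 0 ->
  ffun w u s x = x * qmod w u s / 2 ^ w.
Proof.
  intros HW. unfold ffun, vfun, qmod.
  rewrite <- Z.div_add_l by exact HW. f_equal. ring.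
Qed.

Lemma mul_div_nondecreasing q W x y : 0 <= q -> 0 < W -> x <= y -> x * q / W <= y * q / W.
Proof. intros Hq HW Hxy. apply Z.div_le_mono; nia. Qed.

Lemma mul_div_1_lipschitz q W x y : 0 < W -> 0 <= q <= W -> x <= y ->
  y * q / W <= x * q / W + (y - x).
Proof.
  intros HW Hq Hxy. rewrite <- Z.div_add by lia. apply Z.div_le_mono; nia.
Qed.

Lemma qmod_bounds w u s : w <= 2 * u -> u < w -> (s = 1 \/ s = -1) ->
  0 < qmod w u s <= 2 ^ w.
Proof.
  intros Hwu Huw Hs. unfold qmod.
  assert (H2u : 2 ^ 1 <= 2 ^ u) by (apply Z.pow_le_mono_r; lia).
  assert (H2w : 2 ^ (u + 1) <= 2 ^ w) by (apply Z.pow_le_mono_r; lia).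
  rewrite Z.pow_add_r in H2w by lia. simpl in H2u, H2w. lia.
Qed.

Theorem theorem1 (w u s lam : Z) :
  w <= 2 * u -> u < w ->
  (s = 1 \/ s = -1) ->
  0 < lam -> (qmod w u s | lam) ->
  exists i : nat, ffun w u s (bseq w u s lam i) = cval w lam.
Proof.
  intros Hwu Huw Hs Hlam [k Hk].
  pose proof (qmod_bounds _ _ _ Hwu Huw Hs) as Hq.
  assert (HW : 0 < 2 ^ w) by lia.
  assert (Hk0 : 0 < k) by nia.
  assert (Hf : forall x, ffun w u s x = x * qmod w u s / 2 ^ w)
    by (intro; apply ffun_mul_qmod_div; lia).
  assert (Hc : cval w lam = ffun w u s k) by (rewrite Hf, Hk; reflexivity).
  rewrite Hc.
  apply correction_iter_terminates.
  - intros x y Hxy. rewrite !Hf. apply mul_div_nondecreasing; lia.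
  - intros x y Hxy. rewrite !Hf. apply mul_div_1_lipschitz; lia.
  - simpl. rewrite Hc, Hf. apply Z.div_le_upper_bound; nia.
  - intro i. simpl. rewrite Hc. reflexivity.
Qed.
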